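(* Let $a,b,c,d,e,f,g,q,r,s,t,u,v,w$ be nonzero complex numbers with $a^3=bcdefg$, $w^3=qrstuv$ and $$\max(|q|,|r|,|s|,|t|,|u|,|v|,|w/q|,|w/r|,|w/s|,|w/t|,|w/u|,|w/v|)<1,$$ such that all expressions below are well defined. Then \begin{align*} &\sum_{k=-\infty}^\infty\frac{(1-aw^k)(1-a(w/tu)^k/(ef))(1-fg(uv/w)^k/a)(1-eg(tv/w)^k/a)}{(1-g(v/w)^k/a)(1-efg(tuv/w)^k/a)(1-a(w/u)^k/f)(1-a(w/t)^k/e)}\\ &\quad\times\frac{(b;q)_k(c;r)_k(d;s)_k(e;t)_k(f;u)_k(g;v)_k}{(a/b;w/q)_k(a/c;w/r)_k(a/d;w/s)_k(a/e;w/t)_k(a/f;w/u)_k(a/g;w/v)_k}\\ &\quad\times\Bigg[1-\frac{(1-a(w/rs)^k/(cd))(1-a(w/qs)^k/(bd))(1-a(w/qr)^k/(bc))}{(1-a(w/q)^k/b)(1-a(w/r)^k/c)(1-a(w/s)^k/d)}\\ &\qquad\qquad\times\frac{(1-et^k)(1-fu^k)(1-gv^k)}{(1-fg(uv/w)^k/a)(1-eg(tv/w)^k/a)(1-ef(tu/w)^k/a)}\Bigg]\\ &=\frac{(bw/(aq);w/q)_\infty(cw/(ar);w/r)_\infty(dw/(as);w/s)_\infty(ew/(at);w/t)_\infty(fw/(au);w/u)_\infty(gw/(av);w/v)_\infty}{(q/b;q)_\infty(r/c;r)_\infty(s/d;s)_\infty(t/e;t)_\infty(u/f;u)_\infty(v/g;v)_\infty}\\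 &\quad-\frac{(b;q)_\infty(c;r)_\infty(d;s)_\infty(e;t)_\infty(f;u)_\infty(g;v)_\infty}{(a/b;w/q)_\infty(a/c;w/r)_\infty(a/d;w/s)_\infty(a/e;w/t)_\infty(a/f;w/u)_\infty(a/g;w/v)_\infty}. \end{align*}
   Context: For $|q|<1$ and $x\in\mathbb C$, $(x;q)_\infty=\prod_{j\ge0}(1-xq^j)$, and for any integer $k$, $(x;q)_k=(x;q)_\infty/(xq^k;q)_\infty$ (so $(x;q)_k=\prod_{j=0}^{k-1}(1-xq^j)$ for $k\ge0$). Here e.g. $(w/tu)^k$ means $(w/(tu))^k$. The bilateral sum means $\lim_{m,n\to\infty}\sum_{k=-m}^n$. *)

From Stdlib Require Import Reals ZArith.
From Coquelicot Require Import Coquelicot.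
Open Scope C_scope.

Fixpoint Cpown (x : C) (n : nat) : C :=
  match n with O => 1 | S n' => x * Cpown x n' end.

Definition Czpow (x : C) (k : Z) : C :=
  match k with
  | Z0 => 1
  | Zpos p => Cpown x (Pos.to_nat p)
  | Zneg p => / Cpown x (Pos.to_nat p)
  end.

Fixpoint qprod_fin (x q : C) (n : nat) : C :=
  match n with O => 1 | S n' => qprod_fin x q n' * (1 - x * Cpown q n') end.

(* (x;q)_oo := lim_{n -> oo} prod_{j<n} (1 - x q^j), the limit being taken
   componentwise (real and imaginary parts); for |q|<1 the product converges. *)
Definition qinf (x q : C) : C :=
  (real (Lim_seq (fun n => Re (qprod_fin x q n))),
   real (Lim_seq (fun n => Im (qprod_fin x q n)))).

(* (x;q)_k := (x;q)_oo / (x q^k; q)_oo for any integer k (as in the paper) *)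
Definition qpoch (x q : C) (k : Z) : C := qinf x q / qinf (x * Czpow q k) q.

Definition qpoch_defined (x q : C) : Prop :=
  forall k : Z, qinf (x * Czpow q k) q <> 0.

Fixpoint sumZ (T : Z -> C) (lo : Z) (len : nat) : C :=
  match len with
  | O => 0
  | S l => sumZ T lo l + T (lo + Z.of_nat l)%Z
  end.

Definition bisum_partial (T : Z -> C) (m n : nat) : C :=
  sumZ T (- Z.of_nat m)%Z (m + n + 1).

Definition bilateral_sum_is (T : Z -> C) (S : C) : Prop :=
  forall eps : R, (0 < eps)%R ->
    exists N : nat, forall m n : nat, (N <= m)%nat -> (N <= n)%nat ->
      (Cmod (bisum_partial T m n - S) < eps)%R.

(* Let P(k) = prod (x;q)_k / (a/x; w/q)_k, the product running over the six pairs
   (x,q) = (b,q), ..., (g,v).  Since (x;q)_(k+1) = (x;q)_k (1 - x q^k), the summand equals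
   P(k) - P(k+1) as soon as a certain rational function of a w^k, b q^k, ..., g v^k equals
   1 - prod (1 - x q^k) / (1 - (a/x) (w/q)^k); this rational identity holds by the balancing
   conditions a^3 = bcdefg and w^3 = qrstuv.  The bilateral sum therefore telescopes to
   lim P(-m) - lim P(n).  As n -> oo, P(n) tends to the quotient of the infinite products.
   As m -> oo, the reflection formula (x;q)_(-m) = q^(m(m+1)/2) / ((-x)^m (q/x;q)_m) writes
   P(-m) as prod (x w/(a q); w/q)_m / (q/x; q)_m times powers of q^2/w and a/x^2, whose
   products over the six pairs are 1, again by the balancing conditions. *)

From Stdlib Require Import Reals ZArith List Lia Lra Psatz.
From Coquelicot Require Import Coquelicot.
Import ListNotations.
Open Scope C_scope.

Create HintDb nonzero.

Lemma Cinv_neq_0 (x : C) : x <> 0 -> / x <> 0.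
Proof. intros Hx E. apply C1_nz. rewrite <- (Cinv_r x Hx), E. ring. Qed.

Lemma Cdiv_neq_0 (x y : C) : x <> 0 -> y <> 0 -> x / y <> 0.
Proof. intros Hx Hy. now apply Cmult_neq_0, Cinv_neq_0. Qed.

Lemma Copp_neq_0 (x : C) : x <> 0 -> - x <> 0.
Proof. intros Hx E. apply Hx. replace x with (- - x) by ring. rewrite E. ring. Qed.

Lemma Cmult_neq_0_l (x y : C) : x * y <> 0 -> x <> 0.
Proof. intros H E. apply H. rewrite E. ring. Qed.

Lemma Cmult_neq_0_r (x y : C) : x * y <> 0 -> y <> 0.
Proof. intros H E. apply H. rewrite E. ring. Qed.

Lemma Cpow_div (x y : C) n : y <> 0 -> (x / y) ^ n = x ^ n / y ^ n.
Proof. intros Hy. unfold Cdiv. now rewrite Cpow_mult_l, Cpow_inv. Qed.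

Lemma Cpown_Cpow (x : C) n : Cpown x n = x ^ n.
Proof. induction n as [|n IH]; simpl; congruence. Qed.

Lemma Czpow_of_nat (y : C) n : Czpow y (Z.of_nat n) = y ^ n.
Proof. destruct n; simpl; [reflexivity|]. now rewrite SuccNat2Pos.id_succ, Cpown_Cpow. Qed.

Lemma Czpow_opp_of_nat (y : C) n : Czpow y (- Z.of_nat n) = / y ^ n.
Proof. destruct n; simpl. - field. - now rewrite SuccNat2Pos.id_succ, Cpown_Cpow. Qed.

Lemma Z_of_nat_or_opp (k : Z) : exists n, k = Z.of_nat n \/ k = (- Z.of_nat n)%Z.
Proof. exists (Z.abs_nat k). lia. Qed.

Lemma Czpow_neq_0 (y : C) k : y <> 0 -> Czpow y k <> 0.
Proof.
  intros Hy. destruct (Z_of_nat_or_opp k) as [n [-> | ->]].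
  - rewrite Czpow_of_nat. now apply Cpow_nz.
  - rewrite Czpow_opp_of_nat. now apply Cinv_neq_0, Cpow_nz.
Qed.

#[global] Hint Resolve Cmult_neq_0 Cinv_neq_0 Cdiv_neq_0 Copp_neq_0 Cpow_nz Czpow_neq_0 : nonzero.

Lemma Czpow_add_1 (y : C) k : y <> 0 -> Czpow y (k + 1) = Czpow y k * y.
Proof.
  intros Hy. destruct (Z_of_nat_or_opp k) as [n [-> | ->]].
  - replace (Z.of_nat n + 1)%Z with (Z.of_nat (S n)) by lia.
    rewrite !Czpow_of_nat. simpl. ring.
  - destruct n as [|n]; [simpl; ring|].
    replace (- Z.of_nat (S n) + 1)%Z with (- Z.of_nat n)%Z by lia.
    rewrite !Czpow_opp_of_nat. simpl. field. auto with nonzero.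
Qed.

Lemma Czpow_mult (x y : C) k : x <> 0 -> y <> 0 -> Czpow (x * y) k = Czpow x k * Czpow y k.
Proof.
  intros Hx Hy. destruct (Z_of_nat_or_opp k) as [n [-> | ->]].
  - rewrite !Czpow_of_nat. apply Cpow_mult_l.
  - rewrite !Czpow_opp_of_nat, Cpow_mult_l. field. auto with nonzero.
Qed.

Lemma Czpow_div (x y : C) k : x <> 0 -> y <> 0 -> Czpow (x / y) k = Czpow x k / Czpow y k.
Proof.
  intros Hx Hy. destruct (Z_of_nat_or_opp k) as [n [-> | ->]].
  - rewrite !Czpow_of_nat. now apply Cpow_div.
  - rewrite !Czpow_opp_of_nat, Cpow_div by exact Hy. field. auto with nonzero.
Qed.

Lemma qprod_fin_succ_l (x y : C) n : qprod_fin x y (S n) = (1 - x) * qprod_fin (x * y) y n.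
Proof.
  induction n as [|n IH]; [simpl; ring|].
  change (qprod_fin x y (S (S n))) with (qprod_fin x y (S n) * (1 - x * Cpown y (S n))).
  rewrite IH. simpl. ring.
Qed.

Fixpoint tripow (y : C) (m : nat) : C :=
  match m with O => 1 | S m' => tripow y m' * y ^ S m' end.

Lemma tripow_neq_0 (y : C) m : y <> 0 -> tripow y m <> 0.
Proof. intros Hy. induction m; simpl; auto using C1_nz with nonzero. Qed.

#[global] Hint Resolve tripow_neq_0 : nonzero.

Lemma tripow_mult (x y : C) m : tripow (x * y) m = tripow x m * tripow y m.
Proof. induction m as [|m IH]; simpl; [ring|]. rewrite IH, Cpow_mult_l. simpl. ring. Qed.

Lemma tripow_div (x y : C) m : y <> 0 -> tripow (x / y) m = tripow x m / tripow y m.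
Proof.
  intros Hy. induction m as [|m IH]; simpl; [field|].
  rewrite IH, Cpow_div by exact Hy. field. split; auto with nonzero.
Qed.

Lemma tripow_1 m : tripow 1 m = 1.
Proof. induction m as [|m IH]; simpl; [reflexivity|]. rewrite IH, Cpow_1_l. ring. Qed.

Lemma qprod_fin_reflect (x y : C) m : x <> 0 -> y <> 0 ->
  qprod_fin (x / y ^ m) y m * tripow y m = (- x) ^ m * qprod_fin (y / x) y m.
Proof.
  intros Hx Hy. induction m as [|m IH]; [simpl; ring|].
  rewrite qprod_fin_succ_l.
  replace (x / y ^ S m * y) with (x / y ^ m) by (simpl; field; auto with nonzero).
  transitivity ((y ^ S m - x) * (qprod_fin (x / y ^ m) y m * tripow y m)).
  - simpl. field. auto with nonzero.
  - rewrite IH. simpl. rewrite (Cpown_Cpow y m). field. exact Hx.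
Qed.

(** * Limits of complex sequences *)

Definition is_lim_Cseq (u : nat -> C) (l : C) : Prop :=
  is_lim_seq (fun n => Re (u n)) (Re l) /\ is_lim_seq (fun n => Im (u n)) (Im l).

Lemma is_lim_Cseq_ext (u v : nat -> C) l :
  (forall n, u n = v n) -> is_lim_Cseq u l -> is_lim_Cseq v l.
Proof.
  intros E [H1 H2].
  split; [apply (is_lim_seq_ext (fun n => Re (u n))) | apply (is_lim_seq_ext (fun n => Im (u n)))];
    try assumption; intros n; now rewrite E.
Qed.

Lemma is_lim_Cseq_const (c : C) : is_lim_Cseq (fun _ => c) c.
Proof. split; apply is_lim_seq_const. Qed.

Lemma is_lim_Cseq_mult (u v : nat -> C) l1 l2 :
  is_lim_Cseq u l1 -> is_lim_Cseq v l2 -> is_lim_Cseq (fun n => u n * v n) (l1 * l2).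
Proof.
  intros [A1 A2] [B1 B2]. split; simpl.
  - apply is_lim_seq_minus'; apply is_lim_seq_mult'; assumption.
  - apply is_lim_seq_plus'; apply is_lim_seq_mult'; assumption.
Qed.

Lemma is_lim_Cseq_inv (u : nat -> C) l :
  is_lim_Cseq u l -> l <> 0 -> is_lim_Cseq (fun n => / u n) (/ l).
Proof.
  intros [A1 A2] Hl.
  assert (Hd : (fst l ^ 2 + snd l ^ 2 <> 0)%R).
  { intros E. apply Hl. destruct l as [l1 l2]. simpl in E.
    assert (l1 = 0%R) by nra. assert (l2 = 0%R) by nra. subst. reflexivity. }
  assert (D : is_lim_seq (fun n => fst (u n) ^ 2 + snd (u n) ^ 2)%R (fst l ^ 2 + snd l ^ 2)%R).
  { simpl. apply is_lim_seq_plus'; repeat apply is_lim_seq_mult';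
      first [exact A1 | exact A2 | apply is_lim_seq_const]. }
  split; simpl; apply is_lim_seq_div'; auto.
  apply (is_lim_seq_opp _ (Finite (snd l))). exact A2.
Qed.

Lemma is_lim_Cseq_div (u v : nat -> C) l1 l2 :
  is_lim_Cseq u l1 -> is_lim_Cseq v l2 -> l2 <> 0 -> is_lim_Cseq (fun n => u n / v n) (l1 / l2).
Proof. intros. apply is_lim_Cseq_mult; [|apply is_lim_Cseq_inv]; assumption. Qed.

Lemma is_lim_Cseq_unique (u : nat -> C) l1 l2 : is_lim_Cseq u l1 -> is_lim_Cseq u l2 -> l1 = l2.
Proof.
  intros [A1 A2] [B1 B2].
  apply is_lim_seq_unique in A1, A2, B1, B2.
  destruct l1 as [x1 y1], l2 as [x2 y2]. simpl in *.
  rewrite A1 in B1. rewrite A2 in B2. injection B1; injection B2; intros; subst; auto.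
Qed.

Lemma is_lim_Cseq_incr_1 (u : nat -> C) l : is_lim_Cseq u l -> is_lim_Cseq (fun n => u (S n)) l.
Proof.
  intros [A B].
  split; [apply (is_lim_seq_incr_1 (fun n => Re (u n))) | apply (is_lim_seq_incr_1 (fun n => Im (u n)))];
    assumption.
Qed.

Lemma im_le_Cmod (z : C) : (Rabs (Im z) <= Cmod z)%R.
Proof.
  destruct z as [x y]. unfold Cmod, Im; simpl.
  rewrite <- sqrt_Rsqr_abs. apply sqrt_le_1_alt. unfold Rsqr. nra.
Qed.

Lemma Cmod_le_Re_Im (z : C) : (Cmod z <= Rabs (Re z) + Rabs (Im z))%R.
Proof.
  destruct z as [x y]. unfold Cmod, Re, Im; simpl.
  pose proof (Rabs_pos x); pose proof (Rabs_pos y).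
  rewrite <- (sqrt_Rsqr (Rabs x + Rabs y)) by lra.
  apply sqrt_le_1_alt. unfold Rsqr.
  assert (x * x = Rabs x * Rabs x)%R by (rewrite <- Rabs_mult, Rabs_pos_eq; nra).
  assert (y * y = Rabs y * Rabs y)%R by (rewrite <- Rabs_mult, Rabs_pos_eq; nra).
  nra.
Qed.

Lemma is_lim_Cseq_Cmod (u : nat -> C) l : is_lim_Cseq u l ->
  forall eps, (0 < eps)%R -> exists N, forall n, (N <= n)%nat -> (Cmod (u n - l) < eps)%R.
Proof.
  intros [A B] eps He. apply is_lim_seq_spec in A, B.
  assert (He2 : (0 < eps / 2)%R) by lra.
  destruct (A (mkposreal _ He2)) as [N1 H1], (B (mkposreal _ He2)) as [N2 H2].
  exists (N1 + N2)%nat. intros n Hn.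
  eapply Rle_lt_trans; [apply Cmod_le_Re_Im|].
  specialize (H1 n ltac:(lia)). specialize (H2 n ltac:(lia)). simpl in H1, H2.
  unfold Re, Im, Rminus in *. simpl. lra.
Qed.

Lemma ex_finite_lim_seq_geometric_steps (u : nat -> R) (K rho : R) :
  (Rabs rho < 1)%R -> (forall n, Rabs (u (S n) - u n) <= K * rho ^ n)%R ->
  ex_finite_lim_seq u.
Proof.
  intros Hrho Hsteps.
  set (d n := (u (S n) - u n)%R).
  assert (Hd : ex_series d).
  { apply (ex_series_le d (fun n => K * rho ^ n)%R); [exact Hsteps|].
    apply (ex_series_scal_l K (fun n => rho ^ n)%R), ex_series_geom, Hrho. }
  assert (Hsum : forall n, sum_n d n = (u (S n) - u O)%R).
  { induction n as [|n IH]; [apply sum_O|].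
    rewrite sum_Sn, IH. unfold d, plus; simpl. ring. }
  exists (Series d + u O)%R.
  apply is_lim_seq_incr_1, (is_lim_seq_ext (fun n => sum_n d n + u O)%R).
  - intros n. rewrite Hsum. ring.
  - apply is_lim_seq_plus'; [apply Series_correct, Hd | apply is_lim_seq_const].
Qed.

Lemma qprod_fin_bound (x y : C) n : (Cmod y < 1)%R ->
  (Cmod (qprod_fin x y n) <= exp (Cmod x / (1 - Cmod y)))%R.
Proof.
  intros Hy.
  assert (Hpartial : (Cmod (qprod_fin x y n) <= exp (Cmod x * (1 - Cmod y ^ n) / (1 - Cmod y)))%R).
  { induction n as [|n IH]; simpl.
    - rewrite Cmod_1. replace (Cmod x * (1 - 1) / (1 - Cmod y))%R with 0%R by (field; lra).
      rewrite exp_0. lra.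
    - replace (Cmod x * (1 - Cmod y * Cmod y ^ n) / (1 - Cmod y))%R
        with (Cmod x * (1 - Cmod y ^ n) / (1 - Cmod y) + Cmod x * Cmod y ^ n)%R by (field; lra).
      rewrite Cmod_mult, exp_plus.
      apply Rmult_le_compat; try apply Cmod_ge_0; [exact IH|].
      eapply Rle_trans; [apply Cmod_triangle|].
      rewrite Cmod_opp, Cmod_1, Cmod_mult, Cpown_Cpow, Cmod_pow. apply exp_ineq1_le. }
  assert (Hle : (Cmod x * (1 - Cmod y ^ n) / (1 - Cmod y) <= Cmod x / (1 - Cmod y))%R).
  { unfold Rdiv. apply Rmult_le_compat_r; [left; apply Rinv_0_lt_compat; lra|].
    pose proof (Cmod_ge_0 x). pose proof (pow_le (Cmod y) n (Cmod_ge_0 y)). nra. }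
  eapply Rle_trans; [exact Hpartial|].
  destruct (Rle_lt_or_eq_dec _ _ Hle) as [Hlt | ->]; [left; now apply exp_increasing | right; reflexivity].
Qed.

Lemma qprod_fin_step (x y : C) n : (Cmod y < 1)%R ->
  (Cmod (qprod_fin x y (S n) - qprod_fin x y n)
     <= exp (Cmod x / (1 - Cmod y)) * Cmod x * Cmod y ^ n)%R.
Proof.
  intros Hy. simpl qprod_fin.
  replace (qprod_fin x y n * (1 - x * Cpown y n) - qprod_fin x y n)
    with (- (qprod_fin x y n * (x * Cpown y n))) by ring.
  rewrite Cmod_opp, !Cmod_mult, Cpown_Cpow, Cmod_pow, Rmult_assoc.
  apply Rmult_le_compat_r; [apply Rmult_le_pos; [apply Cmod_ge_0 | apply pow_le, Cmod_ge_0]|].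
  apply qprod_fin_bound, Hy.
Qed.

Lemma is_lim_seq_real_Lim_seq (u : nat -> R) : ex_finite_lim_seq u -> is_lim_seq u (real (Lim_seq u)).
Proof. intros [l Hl]. now rewrite (is_lim_seq_unique _ _ Hl). Qed.

Lemma is_lim_qprod_fin (x y : C) : (Cmod y < 1)%R -> is_lim_Cseq (qprod_fin x y) (qinf x y).
Proof.
  intros Hy.
  assert (Hrho : (Rabs (Cmod y) < 1)%R) by (rewrite Rabs_pos_eq; [exact Hy | apply Cmod_ge_0]).
  set (K := (exp (Cmod x / (1 - Cmod y)) * Cmod x)%R).
  split; apply is_lim_seq_real_Lim_seq; apply (ex_finite_lim_seq_geometric_steps _ K _ Hrho);
    intros n; (eapply Rle_trans; [|apply (qprod_fin_step x y n Hy)]).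
  - apply (re_le_Cmod (qprod_fin x y (S n) - qprod_fin x y n)).
  - apply (im_le_Cmod (qprod_fin x y (S n) - qprod_fin x y n)).
Qed.

Lemma qinf_succ_l (x y : C) : (Cmod y < 1)%R -> qinf x y = (1 - x) * qinf (x * y) y.
Proof.
  intros Hy. apply (is_lim_Cseq_unique (fun n => qprod_fin x y (S n))).
  - apply is_lim_Cseq_incr_1, is_lim_qprod_fin, Hy.
  - apply (is_lim_Cseq_ext (fun n => (1 - x) * qprod_fin (x * y) y n)).
    + intros n. symmetry. apply qprod_fin_succ_l.
    + apply is_lim_Cseq_mult; [apply is_lim_Cseq_const | apply is_lim_qprod_fin, Hy].
Qed.

Lemma qinf_split (x y : C) n : (Cmod y < 1)%R -> qinf x y = qprod_fin x y n * qinf (x * y ^ n) y.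
Proof.
  intros Hy. induction n as [|n IH]; simpl.
  - rewrite Cmult_1_r. ring.
  - rewrite IH, (qinf_succ_l (x * y ^ n)) by exact Hy.
    replace (x * y ^ n * y) with (x * (y * y ^ n)) by ring. rewrite (Cpown_Cpow y n). ring.
Qed.

(** * q-Pochhammer symbols at integer arguments *)

Lemma qinf_neq_0 (x y : C) : qpoch_defined x y -> qinf x y <> 0.
Proof. intros H. specialize (H 0%Z). simpl in H. now rewrite Cmult_1_r in H. Qed.

Lemma qpoch_add_1 (x y : C) k : y <> 0 -> (Cmod y < 1)%R -> qpoch_defined x y ->
  qpoch x y (k + 1) = qpoch x y k * (1 - x * Czpow y k).
Proof.
  intros Hy0 Hy Hdef. unfold qpoch.
  assert (H1 := Hdef k). assert (H2 := Hdef (k + 1)%Z).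
  rewrite Czpow_add_1 in H2 |- * by exact Hy0.
  rewrite (qinf_succ_l (x * Czpow y k)) in H1 |- * by exact Hy.
  replace (x * Czpow y k * y) with (x * (Czpow y k * y)) in * by ring.
  field. split; [exact H2 | exact (Cmult_neq_0_l _ _ H1)].
Qed.

Lemma qpoch_of_nat (x y : C) n : (Cmod y < 1)%R -> qpoch_defined x y ->
  qpoch x y (Z.of_nat n) = qprod_fin x y n.
Proof.
  intros Hy Hdef. assert (H := Hdef (Z.of_nat n)).
  unfold qpoch. rewrite Czpow_of_nat in H |- *. rewrite (qinf_split x y n Hy).
  field. exact H.
Qed.

Lemma qinf_shift_down (x y : C) m : y <> 0 -> (Cmod y < 1)%R ->
  qinf (x * Czpow y (- Z.of_nat m)) y = qprod_fin (x / y ^ m) y m * qinf x y.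
Proof.
  intros Hy0 Hy. rewrite Czpow_opp_of_nat, (qinf_split _ y m Hy).
  replace (x * / y ^ m * y ^ m) with x by (field; auto with nonzero). reflexivity.
Qed.

Lemma qprod_fin_reflected_neq_0 (x y : C) m : x <> 0 -> y <> 0 -> (Cmod y < 1)%R ->
  qpoch_defined x y -> qprod_fin (y / x) y m <> 0.
Proof.
  intros Hx Hy0 Hy Hdef.
  assert (H := Hdef (- Z.of_nat m)%Z). rewrite qinf_shift_down in H by assumption.
  apply (Cmult_neq_0_r ((- x) ^ m)). rewrite <- qprod_fin_reflect by assumption.
  apply Cmult_neq_0; [exact (Cmult_neq_0_l _ _ H) | auto with nonzero].
Qed.

Lemma qpoch_opp_of_nat (x y : C) m : x <> 0 -> y <> 0 -> (Cmod y < 1)%R -> qpoch_defined x y ->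
  qpoch x y (- Z.of_nat m) = tripow y m / ((- x) ^ m * qprod_fin (y / x) y m).
Proof.
  intros Hx Hy0 Hy Hdef.
  assert (H := Hdef (- Z.of_nat m)%Z). rewrite qinf_shift_down in H by assumption.
  pose proof (qprod_fin_reflected_neq_0 x y m Hx Hy0 Hy Hdef).
  unfold qpoch. rewrite qinf_shift_down, <- qprod_fin_reflect by assumption.
  field. repeat split; auto with nonzero.
  - exact (Cmult_neq_0_l _ _ H).
  - exact (Cmult_neq_0_r _ _ H).
Qed.

(** * Products over parameter pairs *)

Fixpoint Cprod (F : C -> C -> C) (L : list (C * C)) : C :=
  match L with
  | [] => 1
  | (x, q) :: L' => F x q * Cprod F L'
  end.

Lemma Cprod_ext (F G : C -> C -> C) L :
  List.Forall (fun '(x, q) => F x q = G x q) L -> Cprod F L = Cprod G L.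
Proof. intros HL. induction HL as [|[x q] L' E _ IH]; simpl; congruence. Qed.

Lemma Cprod_mult (F G : C -> C -> C) L :
  Cprod (fun x q => F x q * G x q) L = Cprod F L * Cprod G L.
Proof. induction L as [|[x q] L' IH]; simpl; [ring|]. rewrite IH. ring. Qed.

Lemma Cprod_neq_0 (F : C -> C -> C) L : List.Forall (fun '(x, q) => F x q <> 0) L -> Cprod F L <> 0.
Proof. intros HL. induction HL as [|[x q] L' H _ IH]; simpl; [apply C1_nz | now apply Cmult_neq_0]. Qed.

Lemma Cprod_neq_0_inv (F : C -> C -> C) L : Cprod F L <> 0 -> List.Forall (fun '(x, q) => F x q <> 0) L.
Proof.
  induction L as [|[x q] L' IH]; simpl; intros H; constructor.
  - exact (Cmult_neq_0_l _ _ H).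
  - exact (IH (Cmult_neq_0_r _ _ H)).
Qed.

Lemma Cprod_div (F G : C -> C -> C) L : List.Forall (fun '(x, q) => G x q <> 0) L ->
  Cprod (fun x q => F x q / G x q) L = Cprod F L / Cprod G L.
Proof.
  intros HG. induction HG as [|[x q] L' H HG IH]; simpl; [field|].
  rewrite IH. field. split; [now apply Cprod_neq_0 | exact H].
Qed.

Lemma Cprod_morph (h : C -> C) (F : C -> C -> C) L :
  h 1 = 1 -> (forall y z, h (y * z) = h y * h z) ->
  Cprod (fun x q => h (F x q)) L = h (Cprod F L).
Proof. intros H1 HM. induction L as [|[x q] L' IH]; simpl; [auto|]. now rewrite IH, HM. Qed.

Lemma is_lim_Cprod (F : nat -> C -> C -> C) (l : C -> C -> C) L :
  List.Forall (fun '(x, q) => is_lim_Cseq (fun n => F n x q) (l x q)) L ->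
  is_lim_Cseq (fun n => Cprod (F n) L) (Cprod l L).
Proof.
  intros HL. induction HL as [|[x q] L' H _ IH]; simpl; [apply is_lim_Cseq_const|].
  now apply is_lim_Cseq_mult.
Qed.

Section PochhammerQuotient.

Variables (a w : C) (L : list (C * C)).
Hypotheses (Ha : a <> 0) (Hw : w <> 0).

Definition admissible (x q : C) : Prop :=
  x <> 0 /\ q <> 0 /\ (Cmod q < 1)%R /\ (Cmod (w / q) < 1)%R /\
  qpoch_defined x q /\ qpoch_defined (a / x) (w / q).

Hypothesis HL : List.Forall (fun '(x, q) => admissible x q) L.

Definition poch_quotient (k : Z) : C :=
  Cprod (fun x q => qpoch x q k / qpoch (a / x) (w / q) k) L.

Lemma poch_quotient_add_1 k :
  Cprod (fun x q => qpoch (a / x) (w / q) (k + 1)) L <> 0 ->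
  poch_quotient (k + 1) = poch_quotient k *
    (Cprod (fun x q => 1 - x * Czpow q k) L / Cprod (fun x q => 1 - a / x * Czpow (w / q) k) L).
Proof.
  intros Hden. apply Cprod_neq_0_inv in Hden.
  assert (Hsteps := List.Forall_and HL Hden).
  unfold poch_quotient. rewrite <- Cprod_div, <- Cprod_mult.
  - apply Cprod_ext. eapply List.Forall_impl; [|exact Hsteps].
    intros [x q] [(Hx & Hq & Hq1 & Hwq1 & Hdef & Hdef') Hnext].
    rewrite qpoch_add_1 in Hnext |- * by auto with nonzero.
    rewrite qpoch_add_1 by auto with nonzero.
    set (step := 1 - a / x * Czpow (w / q) k) in *.
    field. split; [exact (Cmult_neq_0_r _ _ Hnext) | exact (Cmult_neq_0_l _ _ Hnext)].
  - eapply List.Forall_impl; [|exact Hsteps].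
    intros [x q] [(Hx & Hq & Hq1 & Hwq1 & Hdef & Hdef') Hnext].
    rewrite qpoch_add_1 in Hnext by auto with nonzero.
    exact (Cmult_neq_0_r _ _ Hnext).
Qed.

Lemma is_lim_poch_quotient_pos :
  is_lim_Cseq (fun n => poch_quotient (Z.of_nat n))
    (Cprod (fun x q => qinf x q) L / Cprod (fun x q => qinf (a / x) (w / q)) L).
Proof.
  rewrite <- Cprod_div.
  - apply is_lim_Cprod. eapply List.Forall_impl; [|exact HL].
    intros [x q] (Hx & Hq & Hq1 & Hwq1 & Hdef & Hdef').
    apply (is_lim_Cseq_ext (fun n => qprod_fin x q n / qprod_fin (a / x) (w / q) n)).
    + intros n. rewrite !qpoch_of_nat by assumption. reflexivity.
    + apply is_lim_Cseq_div; try apply is_lim_qprod_fin; try assumption.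
      now apply qinf_neq_0.
  - eapply List.Forall_impl; [|exact HL].
    intros [x q] (Hx & Hq & Hq1 & Hwq1 & Hdef & Hdef'). now apply qinf_neq_0.
Qed.

Lemma quotient_opp_of_nat x q m : admissible x q ->
  qpoch x q (- Z.of_nat m) / qpoch (a / x) (w / q) (- Z.of_nat m)
  = tripow (q * q / w) m * (a / (x * x)) ^ m
    * (qprod_fin (x * w / (a * q)) (w / q) m / qprod_fin (q / x) q m).
Proof.
  intros (Hx & Hq & Hq1 & Hwq1 & Hdef & Hdef').
  pose proof (qprod_fin_reflected_neq_0 x q m Hx Hq Hq1 Hdef).
  pose proof (qprod_fin_reflected_neq_0 (a / x) (w / q) m
                   ltac:(auto with nonzero) ltac:(auto with nonzero) Hwq1 Hdef').
  rewrite !qpoch_opp_of_nat by auto with nonzero.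
  replace (q * q / w) with (q / (w / q)) by (field; auto).
  replace (a / (x * x)) with (- (a / x) / - x) by (field; auto).
  replace (x * w / (a * q)) with (w / q / (a / x)) by (field; auto).
  rewrite (tripow_div q (w / q)), (Cpow_div (- (a / x)) (- x)) by auto with nonzero.
  field. repeat split; auto with nonzero.
Qed.

Lemma is_lim_poch_quotient_neg :
  Cprod (fun x _ => a / (x * x)) L = 1 -> Cprod (fun _ q => q * q / w) L = 1 ->
  Cprod (fun x q => qinf (q / x) q) L <> 0 ->
  is_lim_Cseq (fun m => poch_quotient (- Z.of_nat m))
    (Cprod (fun x q => qinf (x * w / (a * q)) (w / q)) L / Cprod (fun x q => qinf (q / x) q) L).
Proof.
  intros Hx2 Hq2 Hden. apply Cprod_neq_0_inv in Hden.
  apply (is_lim_Cseq_ext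
    (fun m => Cprod (fun x q => qprod_fin (x * w / (a * q)) (w / q) m / qprod_fin (q / x) q m) L)).
  - intros m. unfold poch_quotient. symmetry.
    rewrite (Cprod_ext _ (fun x q => tripow (q * q / w) m * (a / (x * x)) ^ m
      * (qprod_fin (x * w / (a * q)) (w / q) m / qprod_fin (q / x) q m)) L).
    2: { eapply List.Forall_impl; [|exact HL]. intros [x q]. apply quotient_opp_of_nat. }
    rewrite !Cprod_mult.
    assert (Htri : Cprod (fun _ q => tripow (q * q / w) m) L = 1).
    { rewrite <- (tripow_1 m), <- Hq2.
      exact (Cprod_morph (fun z => tripow z m) _ L (tripow_1 m) (fun y z => tripow_mult y z m)). }
    assert (Hpow : Cprod (fun x _ => (a / (x * x)) ^ m) L = 1).
    { rewrite <- (Cpow_1_l m), <- Hx2.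
      exact (Cprod_morph (fun z => z ^ m) _ L (Cpow_1_l m) (fun y z => Cpow_mult_l y z m)). }
    rewrite Htri, Hpow. ring.
  - rewrite <- Cprod_div by exact Hden. apply is_lim_Cprod.
    eapply List.Forall_impl; [|exact (List.Forall_and HL Hden)].
    intros [x q] [(Hx & Hq & Hq1 & Hwq1 & Hdef & Hdef') Hinf].
    apply is_lim_Cseq_div; [apply is_lim_qprod_fin .. | exact Hinf]; assumption.
Qed.

End PochhammerQuotient.

(** * Telescoping bilateral sums *)

Lemma sumZ_telescoping (T P : Z -> C) lo len : (forall k, T k = P k - P (k + 1)%Z) ->
  sumZ T lo len = P lo - P (lo + Z.of_nat len)%Z.
Proof.
  intros HT. induction len as [|len IH]; simpl.
  - rewrite Z.add_0_r. ring.
  - rewrite IH, HT. replace (lo + Z.pos (Pos.of_succ_nat len))%Z with (lo + Z.of_nat len + 1)%Z by lia.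
    ring.
Qed.

Lemma bilateral_sum_telescoping (T P : Z -> C) L1 L2 :
  (forall k, T k = P k - P (k + 1)%Z) ->
  is_lim_Cseq (fun m => P (- Z.of_nat m)%Z) L1 -> is_lim_Cseq (fun n => P (Z.of_nat n)) L2 ->
  bilateral_sum_is T (L1 - L2).
Proof.
  intros HT Hneg Hpos eps Heps.
  destruct (is_lim_Cseq_Cmod _ _ Hneg (eps / 2)) as [N1 H1]; [lra|].
  destruct (is_lim_Cseq_Cmod _ _ (is_lim_Cseq_incr_1 _ _ Hpos) (eps / 2)) as [N2 H2]; [lra|].
  exists (N1 + N2)%nat. intros m n Hm Hn.
  unfold bisum_partial. rewrite (sumZ_telescoping T P) by exact HT.
  replace (- Z.of_nat m + Z.of_nat (m + n + 1))%Z with (Z.of_nat (S n)) by lia.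
  specialize (H1 m ltac:(lia)). specialize (H2 n ltac:(lia)). cbv beta in H1, H2.
  replace (P (- Z.of_nat m)%Z - P (Z.of_nat (S n)) - (L1 - L2))
    with ((P (- Z.of_nat m)%Z - L1) + - (P (Z.of_nat (S n)) - L2)) by ring.
  eapply Rle_lt_trans; [apply Cmod_triangle|]. rewrite Cmod_opp. lra.
Qed.

(** * The six parameter pairs of the theorem *)

(* Closes a side condition [p - q <> 0] of [field] from a hypothesis [1 - X <> 0] such that
   [1 - X = (p - q) / p] or [1 - X = (q - p) / q]. *)
Ltac neq_0_from_hyp :=
  match goal with
  | |- ?p - ?q <> _ =>
    let Hpq := fresh in intro Hpq;
    match goal with
    | H : _ - _ <> _ |- _ =>
      apply H;
      first
        [ transitivity ((p - q) * / p);
          [solve [field; repeat split; auto with nonzero] | rewrite Hpq; ring]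
        | transitivity ((p - q) * - / q);
          [solve [field; repeat split; auto with nonzero] | rewrite Hpq; ring] ]
    end
  end.

Section Sextet.

Variables a b c d e f g q r s t u v w : C.
Hypotheses (Ha : a <> 0) (Hb : b <> 0) (Hc : c <> 0) (Hd : d <> 0) (He : e <> 0) (Hf : f <> 0)
  (Hg : g <> 0) (Hq : q <> 0) (Hr : r <> 0) (Hs : s <> 0) (Ht : t <> 0) (Hu : u <> 0)
  (Hv : v <> 0) (Hw : w <> 0).
Hypothesis Ha3 : a * a * a = b * c * d * e * f * g.
Hypothesis Hw3 : w * w * w = q * r * s * t * u * v.
Hypotheses (Mq : (Cmod q < 1)%R) (Mr : (Cmod r < 1)%R) (Ms : (Cmod s < 1)%R)
  (Mt : (Cmod t < 1)%R) (Mu : (Cmod u < 1)%R) (Mv : (Cmod v < 1)%R)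
  (Mwq : (Cmod (w / q) < 1)%R) (Mwr : (Cmod (w / r) < 1)%R) (Mws : (Cmod (w / s) < 1)%R)
  (Mwt : (Cmod (w / t) < 1)%R) (Mwu : (Cmod (w / u) < 1)%R) (Mwv : (Cmod (w / v) < 1)%R).
Hypotheses (Dbq : qpoch_defined b q) (Dcr : qpoch_defined c r) (Dds : qpoch_defined d s)
  (Det : qpoch_defined e t) (Dfu : qpoch_defined f u) (Dgv : qpoch_defined g v)
  (Dab : qpoch_defined (a / b) (w / q)) (Dac : qpoch_defined (a / c) (w / r))
  (Dad : qpoch_defined (a / d) (w / s)) (Dae : qpoch_defined (a / e) (w / t))
  (Daf : qpoch_defined (a / f) (w / u)) (Dag : qpoch_defined (a / g) (w / v)).

Definition sextet : list (C * C) := [(b, q); (c, r); (d, s); (e, t); (f, u); (g, v)].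

Lemma Cprod_sextet (F : C -> C -> C) :
  Cprod F sextet = F b q * F c r * F d s * F e t * F f u * F g v.
Proof. simpl. ring. Qed.

Lemma sextet_admissible : List.Forall (fun '(x, y) => admissible a w x y) sextet.
Proof. repeat constructor; auto with nonzero. Qed.

Lemma sextet_balanced_x : Cprod (fun x _ => a / (x * x)) sextet = 1.
Proof.
  rewrite Cprod_sextet.
  transitivity (a * a * a * (a * a * a) / ((b * c * d * e * f * g) * (b * c * d * e * f * g))).
  - field. repeat split; assumption.
  - rewrite Ha3. field. repeat split; assumption.
Qed.

Lemma sextet_balanced_q : Cprod (fun _ y => y * y / w) sextet = 1.
Proof.
  rewrite Cprod_sextet.
  transitivity ((q * r * s * t * u * v) * (q * r * s * t * u * v) / (w * w * w * (w * w * w))).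
  - field. exact Hw.
  - rewrite Hw3. field. repeat split; assumption.
Qed.

Hypothesis Hden : forall k : Z,
  1 - g * Czpow (v / w) k / a <> 0 /\
  1 - e * f * g * Czpow (t * u * v / w) k / a <> 0 /\
  1 - a * Czpow (w / u) k / f <> 0 /\
  1 - a * Czpow (w / t) k / e <> 0 /\
  1 - a * Czpow (w / q) k / b <> 0 /\
  1 - a * Czpow (w / r) k / c <> 0 /\
  1 - a * Czpow (w / s) k / d <> 0 /\
  1 - f * g * Czpow (u * v / w) k / a <> 0 /\
  1 - e * g * Czpow (t * v / w) k / a <> 0 /\
  1 - e * f * Czpow (t * u / w) k / a <> 0 /\
  qpoch (a / b) (w / q) k * qpoch (a / c) (w / r) k * qpoch (a / d) (w / s) k
  * qpoch (a / e) (w / t) k * qpoch (a / f) (w / u) k * qpoch (a / g) (w / v) k <> 0.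

Definition summand_prefactor (k : Z) : C :=
  (1 - a * Czpow w k) * (1 - a * Czpow (w / (t * u)) k / (e * f))
  * (1 - f * g * Czpow (u * v / w) k / a) * (1 - e * g * Czpow (t * v / w) k / a)
  / ((1 - g * Czpow (v / w) k / a) * (1 - e * f * g * Czpow (t * u * v / w) k / a)
     * (1 - a * Czpow (w / u) k / f) * (1 - a * Czpow (w / t) k / e)).

Definition summand_bracket (k : Z) : C :=
  1 -
  (1 - a * Czpow (w / (r * s)) k / (c * d)) * (1 - a * Czpow (w / (q * s)) k / (b * d))
  * (1 - a * Czpow (w / (q * r)) k / (b * c))
  / ((1 - a * Czpow (w / q) k / b) * (1 - a * Czpow (w / r) k / c)
     * (1 - a * Czpow (w / s) k / d))
  * ((1 - e * Czpow t k) * (1 - f * Czpow u k) * (1 - g * Czpow v k)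
     / ((1 - f * g * Czpow (u * v / w) k / a) * (1 - e * g * Czpow (t * v / w) k / a)
        * (1 - e * f * Czpow (t * u / w) k / a))).

Definition summand (k : Z) : C :=
  summand_prefactor k
  * (qpoch b q k * qpoch c r k * qpoch d s k * qpoch e t k * qpoch f u k * qpoch g v k
     / (qpoch (a / b) (w / q) k * qpoch (a / c) (w / r) k * qpoch (a / d) (w / s) k
        * qpoch (a / e) (w / t) k * qpoch (a / f) (w / u) k * qpoch (a / g) (w / v) k))
  * summand_bracket k.

(* Eliminating g and v^k through the balancing conditions turns this into an identity between
   rational functions. *)
Lemma summand_factor_identity k :
  summand_prefactor k * summand_bracket k
  = 1 - Cprod (fun x y => 1 - x * Czpow y k) sextet
        / Cprod (fun x y => 1 - a / x * Czpow (w / y) k) sextet.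
Proof.
  destruct (Hden k) as (H1 & H2 & H3 & H4 & H5 & H6 & H7 & H8 & H9 & H10 & _).
  unfold summand_prefactor, summand_bracket. rewrite !Cprod_sextet.
  rewrite !Czpow_div, !Czpow_mult in * by auto with nonzero.
  assert (HW3 : Czpow w k * Czpow w k * Czpow w k
    = Czpow q k * Czpow r k * Czpow s k * Czpow t k * Czpow u k * Czpow v k)
    by (rewrite <- !Czpow_mult by auto with nonzero; now rewrite Hw3).
  pose proof (Czpow_neq_0 w k Hw). pose proof (Czpow_neq_0 q k Hq).
  pose proof (Czpow_neq_0 r k Hr). pose proof (Czpow_neq_0 s k Hs).
  pose proof (Czpow_neq_0 t k Ht). pose proof (Czpow_neq_0 u k Hu).
  pose proof (Czpow_neq_0 v k Hv).
  set (W := Czpow w k) in *. set (Q := Czpow q k) in *. set (R := Czpow r k) in *.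
  set (S := Czpow s k) in *. set (T := Czpow t k) in *. set (U := Czpow u k) in *.
  set (V := Czpow v k) in *.
  clearbody W Q R S T U V.
  assert (Eg : g = a * a * a / (b * c * d * e * f)) by (rewrite Ha3; field; repeat split; assumption).
  assert (EV : V = W * W * W / (Q * R * S * T * U)) by (rewrite HW3; field; repeat split; assumption).
  subst g V.
  field.
  repeat split; auto with nonzero; neq_0_from_hyp.
Qed.

Lemma summand_telescopes k :
  summand k = poch_quotient a w sextet k - poch_quotient a w sextet (k + 1).
Proof.
  destruct (Hden k) as (_ & _ & _ & _ & _ & _ & _ & _ & _ & _ & Hk).
  destruct (Hden (k + 1)%Z) as (_ & _ & _ & _ & _ & _ & _ & _ & _ & _ & Hk1).
  rewrite <- (Cprod_sextet (fun x y => qpoch (a / x) (w / y) (k + 1))) in Hk1.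
  rewrite (poch_quotient_add_1 a w sextet Hw sextet_admissible k Hk1).
  assert (Hquot : qpoch b q k * qpoch c r k * qpoch d s k * qpoch e t k * qpoch f u k * qpoch g v k
     / (qpoch (a / b) (w / q) k * qpoch (a / c) (w / r) k * qpoch (a / d) (w / s) k
        * qpoch (a / e) (w / t) k * qpoch (a / f) (w / u) k * qpoch (a / g) (w / v) k)
     = poch_quotient a w sextet k).
  { unfold poch_quotient. rewrite Cprod_div, !Cprod_sextet; [reflexivity|].
    rewrite <- (Cprod_sextet (fun x y => qpoch (a / x) (w / y) k)) in Hk.
    exact (Cprod_neq_0_inv _ _ Hk). }
  unfold summand. rewrite Hquot.
  transitivity (poch_quotient a w sextet k * (summand_prefactor k * summand_bracket k)); [ring|].
  rewrite summand_factor_identity. ring.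
Qed.

Lemma is_lim_poch_quotient_sextet_neg :
  qinf (q / b) q * qinf (r / c) r * qinf (s / d) s
    * qinf (t / e) t * qinf (u / f) u * qinf (v / g) v <> 0 ->
  is_lim_Cseq (fun m => poch_quotient a w sextet (- Z.of_nat m))
    (qinf (b * w / (a * q)) (w / q) * qinf (c * w / (a * r)) (w / r)
     * qinf (d * w / (a * s)) (w / s) * qinf (e * w / (a * t)) (w / t)
     * qinf (f * w / (a * u)) (w / u) * qinf (g * w / (a * v)) (w / v)
     / (qinf (q / b) q * qinf (r / c) r * qinf (s / d) s
        * qinf (t / e) t * qinf (u / f) u * qinf (v / g) v)).
Proof.
  intros Hinf. rewrite <- (Cprod_sextet (fun x y => qinf (y / x) y)) in Hinf |- *.
  rewrite <- (Cprod_sextet (fun x y => qinf (x * w / (a * y)) (w / y))).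
  apply is_lim_poch_quotient_neg; auto using sextet_admissible, sextet_balanced_x, sextet_balanced_q.
Qed.

Lemma is_lim_poch_quotient_sextet_pos :
  is_lim_Cseq (fun n => poch_quotient a w sextet (Z.of_nat n))
    (qinf b q * qinf c r * qinf d s * qinf e t * qinf f u * qinf g v
     / (qinf (a / b) (w / q) * qinf (a / c) (w / r) * qinf (a / d) (w / s)
        * qinf (a / e) (w / t) * qinf (a / f) (w / u) * qinf (a / g) (w / v))).
Proof.
  rewrite <- (Cprod_sextet (fun x y => qinf x y)), <- (Cprod_sextet (fun x y => qinf (a / x) (w / y))).
  apply is_lim_poch_quotient_pos; auto using sextet_admissible.
Qed.

End Sextet.

Theorem mainTheorem4 (a b c d e f g q r s t u v w : C) :
  a <> 0 -> b <> 0 -> c <> 0 -> d <> 0 -> e <> 0 -> f <> 0 -> g <> 0 ->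
  q <> 0 -> r <> 0 -> s <> 0 -> t <> 0 -> u <> 0 -> v <> 0 -> w <> 0 ->
  a * a * a = b * c * d * e * f * g ->
  w * w * w = q * r * s * t * u * v ->
  (Cmod q < 1)%R -> (Cmod r < 1)%R -> (Cmod s < 1)%R ->
  (Cmod t < 1)%R -> (Cmod u < 1)%R -> (Cmod v < 1)%R ->
  (Cmod (w / q) < 1)%R -> (Cmod (w / r) < 1)%R -> (Cmod (w / s) < 1)%R ->
  (Cmod (w / t) < 1)%R -> (Cmod (w / u) < 1)%R -> (Cmod (w / v) < 1)%R ->
  (* well-definedness of the summand: all denominators are nonzero *)
  (forall k : Z,
     1 - g * Czpow (v / w) k / a <> 0 /\
     1 - e * f * g * Czpow (t * u * v / w) k / a <> 0 /\
     1 - a * Czpow (w / u) k / f <> 0 /\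
     1 - a * Czpow (w / t) k / e <> 0 /\
     1 - a * Czpow (w / q) k / b <> 0 /\
     1 - a * Czpow (w / r) k / c <> 0 /\
     1 - a * Czpow (w / s) k / d <> 0 /\
     1 - f * g * Czpow (u * v / w) k / a <> 0 /\
     1 - e * g * Czpow (t * v / w) k / a <> 0 /\
     1 - e * f * Czpow (t * u / w) k / a <> 0 /\
     qpoch (a / b) (w / q) k * qpoch (a / c) (w / r) k * qpoch (a / d) (w / s) k
     * qpoch (a / e) (w / t) k * qpoch (a / f) (w / u) k * qpoch (a / g) (w / v) k
       <> 0) ->
  qpoch_defined b q -> qpoch_defined c r -> qpoch_defined d s ->
  qpoch_defined e t -> qpoch_defined f u -> qpoch_defined g v ->
  qpoch_defined (a / b) (w / q) -> qpoch_defined (a / c) (w / r) ->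
  qpoch_defined (a / d) (w / s) -> qpoch_defined (a / e) (w / t) ->
  qpoch_defined (a / f) (w / u) -> qpoch_defined (a / g) (w / v) ->
  (* well-definedness of the right-hand side *)
  qinf (q / b) q * qinf (r / c) r * qinf (s / d) s
    * qinf (t / e) t * qinf (u / f) u * qinf (v / g) v <> 0 ->
  qinf (a / b) (w / q) * qinf (a / c) (w / r) * qinf (a / d) (w / s)
    * qinf (a / e) (w / t) * qinf (a / f) (w / u) * qinf (a / g) (w / v) <> 0 ->
  bilateral_sum_is
    (fun k : Z =>
       (1 - a * Czpow w k) * (1 - a * Czpow (w / (t * u)) k / (e * f))
       * (1 - f * g * Czpow (u * v / w) k / a) * (1 - e * g * Czpow (t * v / w) k / a)
       / ((1 - g * Czpow (v / w) k / a) * (1 - e * f * g * Czpow (t * u * v / w) k / a)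
          * (1 - a * Czpow (w / u) k / f) * (1 - a * Czpow (w / t) k / e))
       * (qpoch b q k * qpoch c r k * qpoch d s k
          * qpoch e t k * qpoch f u k * qpoch g v k
          / (qpoch (a / b) (w / q) k * qpoch (a / c) (w / r) k * qpoch (a / d) (w / s) k
             * qpoch (a / e) (w / t) k * qpoch (a / f) (w / u) k * qpoch (a / g) (w / v) k))
       * (1 -
          (1 - a * Czpow (w / (r * s)) k / (c * d)) * (1 - a * Czpow (w / (q * s)) k / (b * d))
          * (1 - a * Czpow (w / (q * r)) k / (b * c))
          / ((1 - a * Czpow (w / q) k / b) * (1 - a * Czpow (w / r) k / c)
             * (1 - a * Czpow (w / s) k / d))
          * ((1 - e * Czpow t k) * (1 - f * Czpow u k) * (1 - g * Czpow v k)
             / ((1 - f * g * Czpow (u * v / w) k / a) * (1 - e * g * Czpow (t * v / w) k / a)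
                * (1 - e * f * Czpow (t * u / w) k / a)))))
    (qinf (b * w / (a * q)) (w / q) * qinf (c * w / (a * r)) (w / r)
     * qinf (d * w / (a * s)) (w / s) * qinf (e * w / (a * t)) (w / t)
     * qinf (f * w / (a * u)) (w / u) * qinf (g * w / (a * v)) (w / v)
     / (qinf (q / b) q * qinf (r / c) r * qinf (s / d) s
        * qinf (t / e) t * qinf (u / f) u * qinf (v / g) v)
     - qinf b q * qinf c r * qinf d s * qinf e t * qinf f u * qinf g v
       / (qinf (a / b) (w / q) * qinf (a / c) (w / r) * qinf (a / d) (w / s)
          * qinf (a / e) (w / t) * qinf (a / f) (w / u) * qinf (a / g) (w / v))).
Proof.
  intros.
  apply (bilateral_sum_telescoping _ (poch_quotient a w (sextet b c d e f g q r s t u v))).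
  - intros k. apply summand_telescopes; assumption.
  - apply is_lim_poch_quotient_sextet_neg; assumption.
  - apply is_lim_poch_quotient_sextet_pos; assumption.
Qed.
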